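(* Let $\mathbf d=(d_1,\ldots,d_n)$ be a degree sequence and $g_n$ as defined below. Then for every $v\in[n]$ and every integer $k$ with $2\le k\le n-2$, \[\frac{n-k}{n-k+(k+1)d_v}\,g_n(k+1)\ \le\ \mathbb P(\mathfrak s_n(v)>k)\ \le\ \frac{n-k+1}{n-k+1+k d_v}\,g_n(k).\]
   Context: A degree sequence is $\mathbf d=(d_1,\ldots,d_n)\in\mathbb N_0^n$ with $\sum_j d_j=n$. Let $\mathfrak F(\mathbf d)=\{f:[n]\to[n]: |f^{-1}(\{i\})|=d_i\ \forall i\}$ and let $F$ be uniform on $\mathfrak F(\mathbf d)$. The six-length is $\mathfrak s_f(v)=\min\{k\in\mathbb N: f^{(k)}(v)\in\{f^{(j)}(v):0\le j\le k-1\}\}$ ($f^{(k)}$ the $k$-fold composition, $f^{(0)}=\mathrm{id}$); $\mathfrak s_n(v)=\mathfrak s_F(v)$. $\langle n\rangle_k=n!/(n-k)!$ and $g_n(k)=\frac{k!}{\langle n\rangle_k}\sum_{1\le i_1<\cdots<i_k\le n}\prod_{j=1}^k d_{i_j}$. *)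

From HB Require Import structures.
From mathcomp Require Import all_boot all_order all_algebra.
Set Implicit Arguments. Unset Strict Implicit. Unset Printing Implicit Defensive.
Import Order.TTheory GRing.Theory Num.Theory.

Definition Fset (n : nat) (d : 'I_n -> nat) : {set {ffun 'I_n -> 'I_n}} :=
  [set f : {ffun 'I_n -> 'I_n} | [forall i, #|[set x | f x == i]| == d i]].

Definition six_pred (n : nat) (f : 'I_n -> 'I_n) (v : 'I_n) (k : nat) : bool :=
  (0 < k) && (iter k f v \in traject f v k).

Lemma six_exists (n : nat) (f : 'I_n -> 'I_n) (v : 'I_n) : exists k, six_pred f v k.
Proof.
exists (order f v); rewrite /six_pred.
apply/andP; split; last exact: (looping_order f v).
exact: order_gt0.
Qed.

Definition sixlen (n : nat) (f : 'I_n -> 'I_n) (v : 'I_n) : nat :=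
  ex_minn (six_exists f v).

Definition prob_six_gt (n : nat) (d : 'I_n -> nat) (v : 'I_n) (k : nat) : rat :=
  (#|[set f in Fset d | k < sixlen f v]|)%:R / (#|Fset d|)%:R.

Definition gn (n : nat) (d : 'I_n -> nat) (k : nat) : rat :=
  (k`!)%:R / (n ^_ k)%:R *
  (\sum_(S : {set 'I_n} | #|S| == k) \prod_(i in S) d i)%:R.

From HB Require Import structures.
From mathcomp Require Import all_boot all_order all_algebra.
From mathcomp Require Import fingroup perm action primitive_action alt.
From mathcomp Require Import ring lra zify.
Import Order.TTheory GRing.Theory Num.Theory.
Set Implicit Arguments. Unset Strict Implicit. Unset Printing Implicit Defensive.

(* Reading the orbit v, f v, ..., f^k v step by step, {s(v) > k} is the event that
   f maps the distinct points v, f v, ..., f^(k-1) v to distinct points avoiding v.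
   By symmetry under relabelling the domain, f in F(d) takes k prescribed distinct
   values y_j on k given distinct points with frequency prod_j d(y_j) / <n>_k, so
   P(s(v) > k) = k! e_k(d') / <n>_k, with e_k the elementary symmetric polynomial and
   d' the degree sequence d with d_v replaced by 0.  Splitting e_(k+1)(d) according to
   whether v is chosen gives
     g_n(k+1) = P(s(v) > k+1) + (k+1) d_v / (n-k) * P(s(v) > k),
   so that (n-k)/(n-k+(k+1)d_v) g_n(k+1) is a weighted mean of P(s(v) > k+1) and
   P(s(v) > k); both bounds then follow from the monotonicity of P(s(v) > k) in k. *)

Definition elem_sym n (w : 'I_n -> nat) k : nat :=
  \sum_(S : {set 'I_n} | #|S| == k) \prod_(i in S) w i.

Definition zero_at n (w : 'I_n -> nat) (v i : 'I_n) : nat :=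
  if i == v then 0 else w i.

Lemma sum_prod_avoiding n (w : 'I_n -> nat) v k :
  \sum_(S : {set 'I_n} | (#|S| == k) && (v \notin S)) \prod_(i in S) w i =
  elem_sym (zero_at w v) k.
Proof.
rewrite /elem_sym [RHS](bigID (fun S : {set 'I_n} => v \in S)) /=.
rewrite [X in _ = X + _]big1 ?add0n; last first.
  by move=> S /andP[_ vS]; rewrite (bigD1 v) //= /zero_at eqxx mul0n.
apply: eq_bigr => S /andP[_ vS]; apply: eq_bigr => i iS; rewrite /zero_at.
by case: eqP => // eiv; move: iS; rewrite eiv (negbTE vS).
Qed.

Lemma sum_prod_containing n (w : 'I_n -> nat) v k :
  \sum_(S : {set 'I_n} | (#|S| == k.+1) && (v \in S)) \prod_(i in S) w i =
  w v * \sum_(S : {set 'I_n} | (#|S| == k) && (v \notin S)) \prod_(i in S) w i.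
Proof.
rewrite big_distrr /=.
rewrite (reindex_onto (fun S => v |: S) (fun S => S :\ v)) /=; last first.
  by move=> S /andP[_ vS]; rewrite setD1K.
apply: eq_big => [S|S /andP[_ /eqP defS]]; last first.
  have vS : v \notin S by rewrite -defS setD11.
  by rewrite big_setU1.
case: (boolP (v \in S)) => vS /=.
  by rewrite andbF; apply/negbTE/andP => -[_ /eqP defS]; rewrite -defS setD11 in vS.
by rewrite setU1K // eqxx cardsU1 vS setU11 add1n eqSS !andbT.
Qed.

Lemma elem_symS_zero_at n (w : 'I_n -> nat) v k :
  elem_sym w k.+1 = elem_sym (zero_at w v) k.+1 + w v * elem_sym (zero_at w v) k.
Proof.
rewrite {1}/elem_sym (bigID (fun S : {set 'I_n} => v \in S)) /= addnC.
by rewrite sum_prod_avoiding sum_prod_containing sum_prod_avoiding.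
Qed.

Lemma sum_inj_ffun_prod n (w : 'I_n -> nat) k :
  \sum_(y : {ffun 'I_k -> 'I_n} | injectiveb y) \prod_j w (y j) = k`! * elem_sym w k.
Proof.
rewrite (partition_big (fun y : {ffun 'I_k -> 'I_n} => y @: [set: 'I_k])
                       (fun S => #|S| == k)); last first.
  by move=> y /injectiveP iy; rewrite card_imset // cardsT card_ord.
rewrite /elem_sym big_distrr /=; apply: eq_bigr => S /eqP cardS.
transitivity (\sum_(y : {ffun 'I_k -> 'I_n} | injectiveb y && (y @: [set: 'I_k] == S))
                \prod_(i in S) w i).
  apply: eq_bigr => y /andP[/injectiveP iy /eqP <-].
  rewrite big_imset /=; last by move=> i j _ _; apply: iy.
  by apply: eq_bigl => j; rewrite inE.
rewrite sum_nat_const; congr (_ * _).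
transitivity #|[set y : {ffun 'I_k -> 'I_n} in ffun_on (mem S) | injectiveb y]|.
  apply: eq_card => y; rewrite [in RHS]inE /in_mem /=.
  case: (boolP (injectiveb y)) => [/injectiveP iy|]; last by rewrite andbF.
  rewrite andbT /=; apply/eqP/ffun_onP => [<- j | yS]; first by rewrite imset_f ?inE.
  apply/eqP; rewrite eqEcard card_imset // cardsT card_ord cardS leqnn andbT.
  by apply/subsetP => _ /imsetP[j _ ->]; exact: yS.
rewrite card_inj_ffuns_on card_ord -ffactnn -[X in _ = X ^_ _]cardS.
by congr (_ ^_ _); apply: eq_card.
Qed.

Lemma sum_avoiding_ffun_prod n (w : 'I_n -> nat) v k :
  \sum_(y : {ffun 'I_k -> 'I_n} | uniq (v :: codom y)) \prod_j w (y j) =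
  \sum_(y : {ffun 'I_k -> 'I_n} | injectiveb y) \prod_j zero_at w v (y j).
Proof.
rewrite [RHS](bigID (fun y : {ffun 'I_k -> 'I_n} => v \in codom y)) /=.
rewrite [X in _ = X + _]big1 ?add0n; last first.
  by move=> y /andP[_ /codomP[j ->]]; rewrite (bigD1 j) //= /zero_at eqxx mul0n.
apply: eq_big => [y|y /andP[vy _]].
  by rewrite /= andbC /injectiveb /dinjectiveb -codomE.
apply: eq_bigr => j _; rewrite /zero_at; case: eqP => // yjv.
by rewrite -yjv codom_f in vy.
Qed.

Section Orbits.

Variable n : nat.
Implicit Types (f : 'I_n -> 'I_n) (v : 'I_n).

Lemma uniq_traject_six f v k :
  uniq (traject f v k.+1) <-> (forall j, j <= k -> ~~ six_pred f v j).
Proof.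
elim: k => [|k IHk]; first by split => // _ [|j].
rewrite trajectSr rcons_uniq; split.
  by move=> /andP[fresh /IHk IH] j; rewrite leq_eqVlt ltnS => /orP[/eqP -> | /IH].
move=> no_six; apply/andP; split; first by have := no_six k.+1 (leqnn _).
by apply/IHk => j le_jk; apply: no_six; exact: leqW.
Qed.

Lemma sixlen_gtE f v k : (k < sixlen f v) = uniq (traject f v k.+1).
Proof.
rewrite /sixlen; case: ex_minnP => s six_s s_min.
apply/idP/idP => [lt_ks | /uniq_traject_six no_six].
  apply/uniq_traject_six => j le_jk; apply/negP => /s_min.
  by rewrite leqNgt (leq_ltn_trans le_jk lt_ks).
by rewrite ltnNge; apply/negP => /no_six; rewrite six_s.
Qed.

Definition orbit_ffun f v k : {ffun 'I_k -> 'I_n} := [ffun j : 'I_k => iter j.+1 f v].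

(* The points v, y_0, ..., y_(k-2), which f maps onto y when y = orbit_ffun f v k. *)
Definition orbit_sources k v (y : {ffun 'I_k -> 'I_n}) (j : 'I_k) : 'I_n :=
  nth v (v :: codom y) j.

Lemma nth_codom_ffun k (T : eqType) (y : {ffun 'I_k -> T}) x0 (j : 'I_k) :
  nth x0 (codom y) j = y j.
Proof. by rewrite codomE (nth_map j) ?size_enum_ord // nth_ord_enum. Qed.

Lemma traject_orbit_ffun f v k : traject f v k.+1 = v :: codom (orbit_ffun f v k).
Proof.
apply: (@eq_from_nth _ v); first by rewrite /= size_traject size_codom card_ord.
move=> i; rewrite size_traject => lt_ik; rewrite nth_traject //.
case: i lt_ik => [|i] //= lt_ik; rewrite ltnS in lt_ik.
by rewrite -[i]/(nat_of_ord (Ordinal lt_ik)) nth_codom_ffun ffunE.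
Qed.

Lemma orbit_ffunP f v k (y : {ffun 'I_k -> 'I_n}) :
  (orbit_ffun f v k == y) = [forall j, f (orbit_sources v y j) == y j].
Proof.
apply/eqP/forallP => [<- [[|i] lt_ik] | fy].
- by rewrite /orbit_sources /= ffunE.
- have lt_ik' : i < k := ltnW lt_ik.
  by rewrite /orbit_sources /= -[i]/(nat_of_ord (Ordinal lt_ik')) nth_codom_ffun !ffunE.
apply/ffunP => -[j lt_jk]; rewrite ffunE /=.
elim: j lt_jk => [|j IHj] lt_jk; first by have /eqP := fy (Ordinal lt_jk).
have lt_jk' : j < k := ltnW lt_jk.
rewrite iterS (IHj lt_jk'); have := fy (Ordinal lt_jk); rewrite /orbit_sources /=.
by rewrite -[j]/(nat_of_ord (Ordinal lt_jk')) nth_codom_ffun => /eqP.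
Qed.

Lemma orbit_sources_inj k v (y : {ffun 'I_k -> 'I_n}) :
  uniq (v :: codom y) -> injective (orbit_sources v y).
Proof.
move=> uniq_vy i j eq_ij; apply: val_inj; apply/eqP.
have size_vy : size (v :: codom y) = k.+1 by rewrite /= size_codom card_ord.
rewrite -(nth_uniq v _ _ uniq_vy) ?size_vy ?ltnS ?(ltnW (ltn_ord _)) //.
exact/eqP.
Qed.

End Orbits.

Section Counting.

Variables (n : nat) (d : 'I_n -> nat).

Definition Fset_fixing m (a y : 'I_m -> 'I_n) : {set {ffun 'I_n -> 'I_n}} :=
  [set f in Fset d | [forall j, f (a j) == y j]].

Lemma card_Fset_fixing_perm m (s : {perm 'I_n}) (a a' y : 'I_m -> 'I_n) :
  (forall j, a' j = s (a j)) -> #|Fset_fixing a' y| <= #|Fset_fixing a y|.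
Proof.
move=> a'E; pose g (f : {ffun 'I_n -> 'I_n}) := [ffun x => f (s x)].
have g_inj : injective g.
  move=> f1 f2 /ffunP eqg; apply/ffunP => x.
  by have := eqg ((s^-1)%g x); rewrite !ffunE permKV.
rewrite -(card_imset _ g_inj); apply: subset_leq_card.
apply/subsetP => _ /imsetP[f + ->]; rewrite !inE => /andP[/forallP fF /forallP fa].
apply/andP; split; last by apply/forallP => j; rewrite ffunE -a'E.
apply/forallP => i; rewrite -(eqP (fF i)).
have -> : [set x | g f x == i] = s @^-1: [set x | f x == i].
  by apply/setP => x; rewrite !inE ffunE.
by rewrite card_preimset //; apply: perm_inj.
Qed.

Lemma exists_perm_map_inj m (a a' : 'I_m -> 'I_n) :
  injective a -> injective a' -> exists s : {perm 'I_n}, forall j, a' j = s (a j).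
Proof.
move=> a_inj a'_inj.
have le_mn : m <= #|'I_n| by rewrite -{1}(card_ord m); exact: leq_card a_inj.
have trans_m := ntransitive_weak le_mn (Sym_trans 'I_n).
pose t := [tuple a j | j < m]; pose t' := [tuple a' j | j < m].
have t_dtuple : t \in m.-dtuple(setT).
  by apply/dtuple_onP; split => [i j|i]; rewrite ?inE // !tnth_mktuple => /a_inj.
have t'_dtuple : t' \in m.-dtuple(setT).
  by apply/dtuple_onP; split => [i j|i]; rewrite ?inE // !tnth_mktuple => /a'_inj.
have [s _ st] := atransP2 trans_m t_dtuple t'_dtuple.
exists s => j; have := congr1 (fun u : m.-tuple _ => tnth u j) st.
by rewrite /= /t /t' /n_act !tnth_map !tnth_ord_tuple.
Qed.

Lemma card_Fset_fixing_inj m (a a' y : 'I_m -> 'I_n) :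
  injective a -> injective a' -> #|Fset_fixing a y| = #|Fset_fixing a' y|.
Proof.
move=> a_inj a'_inj; have [s a'E] := exists_perm_map_inj a_inj a'_inj.
apply/eqP; rewrite eqn_leq (card_Fset_fixing_perm y a'E) andbT.
by apply: (@card_Fset_fixing_perm _ (s^-1)%g) => j; rewrite a'E permK.
Qed.

Lemma card_preimage_ffun m (f : {ffun 'I_n -> 'I_n}) (y : 'I_m -> 'I_n) :
  injective y ->
  #|[set a : {ffun 'I_m -> 'I_n} | injectiveb a && [forall j, f (a j) == y j]]| =
  \prod_j #|[set x | f x == y j]|.
Proof.
move=> y_inj.
transitivity #|family (fun j => [set x | f x == y j])|.
  apply: eq_card => a; rewrite inE.
  apply/andP/familyP => [[_ /forallP fa] j | fa]; first by rewrite inE fa.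
  have faE j : f (a j) = y j by apply/eqP; have := fa j; rewrite inE.
  split; last by apply/forallP => j; rewrite faE.
  by apply/injectiveP => i j eq_a; apply: y_inj; rewrite -!faE eq_a.
by rewrite card_family foldrE big_map big_enum.
Qed.

Lemma sum_card_Fset_fixing m (y : 'I_m -> 'I_n) : injective y ->
  \sum_(a : {ffun 'I_m -> 'I_n} | injectiveb a) #|Fset_fixing a y| =
  #|Fset d| * \prod_j d (y j).
Proof.
move=> y_inj.
transitivity (\sum_(a : {ffun 'I_m -> 'I_n} | injectiveb a)
                \sum_(f in Fset d) ([forall j, f (a j) == y j] : nat)).
  apply: eq_bigr => a _; rewrite -sum1_card [LHS]big_mkcond [RHS]big_mkcond /=.
  by apply: eq_bigr => f _; rewrite !inE; case: (f \in Fset d); case: [forall j, _].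
rewrite exchange_big /= -sum1_card big_distrl /=; apply: eq_bigr => f.
rewrite inE => /forallP fF; rewrite mul1n.
have -> : \prod_j d (y j) = \prod_j #|[set x | f x == y j]|.
  by apply: eq_bigr => j _; rewrite (eqP (fF (y j))).
rewrite -(card_preimage_ffun f y_inj) -sum1_card [RHS]big_mkcond [LHS]big_mkcond /=.
by apply: eq_bigr => a _; rewrite !inE; case: (injectiveb a); case: [forall j, _].
Qed.

Lemma card_Fset_fixing m (a y : 'I_m -> 'I_n) : injective a -> injective y ->
  n ^_ m * #|Fset_fixing a y| = #|Fset d| * \prod_j d (y j).
Proof.
move=> a_inj y_inj; rewrite -sum_card_Fset_fixing //.
have := card_inj_ffuns 'I_m 'I_n; rewrite !card_ord => <-.
rewrite -sum1_card big_distrl /=; apply: eq_big => [b|b]; first by rewrite inE.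
by rewrite inE mul1n => /injectiveP b_inj; apply: card_Fset_fixing_inj.
Qed.

Lemma card_Fset_gt0 (x0 : 'I_n) : \sum_i d i = n -> 0 < #|Fset d|.
Proof.
move=> sum_d; pose s := flatten [seq nseq (d i) i | i <- enum 'I_n].
have size_s : size s = n.
  rewrite size_flatten /shape -map_comp sumnE big_map big_enum /= -[RHS]sum_d.
  by apply: eq_bigr => i _; rewrite size_nseq.
pose f := [ffun x : 'I_n => nth x0 s x].
apply/card_gt0P; exists f; rewrite inE; apply/forallP => i.
have -> : #|[set x | f x == i]| = count_mem i s.
  rewrite -sum1_count (big_nth x0) size_s big_mkord -sum1_card.
  by apply: eq_bigl => x; rewrite !inE ffunE.
rewrite count_flatten sumnE -map_comp big_map big_enum /= (bigD1 i) //= big1.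
  by rewrite count_nseq /= eqxx mul1n addn0.
by move=> j /negbTE ji; rewrite count_nseq /= ji.
Qed.

Lemma card_six_gt v k :
  n ^_ k * #|[set f in Fset d | k < sixlen f v]| =
  #|Fset d| * \sum_(y : {ffun 'I_k -> 'I_n} | uniq (v :: codom y)) \prod_j d (y j).
Proof.
rewrite -sum1_card (partition_big (fun f : {ffun 'I_n -> 'I_n} => orbit_ffun f v k)
                                  (fun y => uniq (v :: codom y))).
  rewrite !big_distrr /=; apply: eq_bigr => y uniq_vy.
  have y_inj : injective y by apply/injectiveP; case/andP: uniq_vy.
  rewrite -(card_Fset_fixing (orbit_sources_inj uniq_vy) y_inj) sum1_card.
  congr (_ * _); apply: eq_card => f.
  rewrite unfold_in /= !inE -orbit_ffunP sixlen_gtE traject_orbit_ffun.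
  by case: eqP => [->|_]; rewrite /= ?uniq_vy ?andbT ?andbF.
by move=> f; rewrite inE sixlen_gtE traject_orbit_ffun => /andP[].
Qed.

End Counting.

Local Open Scope ring_scope.

Lemma weighted_mean_between (R : realFieldType) (a b s t : R) :
  0 < s -> 0 <= t -> a <= b ->
  a <= s / (s + t) * (a + t / s * b) /\ s / (s + t) * (a + t / s * b) <= b.
Proof.
move=> s_gt0 t_ge0 le_ab; have st_gt0 : 0 < s + t by rewrite ltr_wpDr.
have -> : s / (s + t) * (a + t / s * b) = (s * a + t * b) / (s + t).
  by field; rewrite !lt0r_neq0.
have := ler_wpM2l t_ge0 le_ab; have := ler_wpM2l (ltW s_gt0) le_ab.
by rewrite ler_pdivlMr // ler_pdivrMr // => sab tab; split; lra.
Qed.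

Lemma prob_six_gtE n (d : 'I_n -> nat) v k :
  (\sum_i d i)%N = n -> (k <= n)%N ->
  prob_six_gt d v k = (k`! * elem_sym (zero_at d v) k)%:R / (n ^_ k)%:R.
Proof.
move=> sum_d le_kn; have Fd_gt0 := card_Fset_gt0 v sum_d.
have := card_six_gt d v k.
rewrite sum_avoiding_ffun_prod sum_inj_ffun_prod => count_six_gt.
rewrite /prob_six_gt; apply/eqP.
rewrite eqr_div ?pnatr_eq0 -?lt0n ?ffact_gt0 // -!natrM eqr_nat.
by rewrite mulnC count_six_gt mulnC.
Qed.

Lemma prob_six_gtS_le n (d : 'I_n -> nat) v k :
  prob_six_gt d v k.+1 <= prob_six_gt d v k.
Proof.
rewrite /prob_six_gt ler_wpM2r ?invr_ge0 ?ler0n // ler_nat.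
by apply/subset_leq_card/subsetP => f; rewrite !inE => /andP[-> /ltnW].
Qed.

Lemma gnS_prob_six_gt n (d : 'I_n -> nat) v k :
  (\sum_i d i)%N = n -> (k < n)%N ->
  gn d k.+1 =
  prob_six_gt d v k.+1 + (k.+1)%:R * (d v)%:R / (n - k)%:R * prob_six_gt d v k.
Proof.
move=> sum_d lt_kn.
have nk_neq0 : (n ^_ k)%:R != 0 :> rat by rewrite pnatr_eq0 -lt0n ffact_gt0 ltnW.
have n_k_neq0 : (n - k)%:R != 0 :> rat by rewrite pnatr_eq0 -lt0n subn_gt0.
rewrite (prob_six_gtE v sum_d lt_kn) (prob_six_gtE v sum_d (ltnW lt_kn)).
change (gn d k.+1) with ((k.+1)`!%:R / (n ^_ k.+1)%:R * (elem_sym d k.+1)%:R : rat).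
rewrite (elem_symS_zero_at d v) ffactnSr factS natrD !natrM.
by field; rewrite nk_neq0 n_k_neq0.
Qed.

Theorem mainTheorem6 (n : nat) (d : 'I_n -> nat)
  (hd : (\sum_(i < n) d i)%N = n) (v : 'I_n) (k : nat)
  (hk2 : (2 <= k)%N) (hkn : (k <= n - 2)%N) :
  ((n - k)%N)%:R / (((n - k)%N)%:R + (k.+1)%:R * (d v)%:R) * gn d k.+1
    <= prob_six_gt d v k /\
  prob_six_gt d v k
    <= ((n - k).+1)%:R / (((n - k).+1)%:R + k%:R * (d v)%:R) * gn d k.
Proof.
have lt_kn : (k < n)%N by lia.
have weight_ge0 m : 0 <= m%:R * (d v)%:R :> rat by rewrite -natrM ler0n.
have gap_gt0 m : (m < n)%N -> 0 < (n - m)%:R :> rat.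
  by move=> lt_mn; rewrite ltr0n subn_gt0.
split.
  rewrite (gnS_prob_six_gt v hd lt_kn).
  exact: (weighted_mean_between (gap_gt0 _ lt_kn) (weight_ge0 _) (prob_six_gtS_le d v k)).2.
case: k hk2 hkn lt_kn => // k _ _ lt_kn; have lt_kn' := ltnW lt_kn.
rewrite subnSK // (gnS_prob_six_gt v hd lt_kn').
exact: (weighted_mean_between (gap_gt0 _ lt_kn') (weight_ge0 _) (prob_six_gtS_le d v k)).1.
Qed.
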